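(* Let $H$ be a real Hilbert space, $C\subseteq H$ a nonempty closed convex set with metric projection $P_C$, and $F\colon H\to H$ a mapping that is strongly monotone, i.e. there is $m>0$ with $\langle F(x)-F(y),x-y\rangle\ge m\|x-y\|^2$ for all $x,y\in H$, and Lipschitz continuous with constant $L>0$. Assume the variational inequality ''find $x^*\in C$ with $\langle F(x^* ),x-x^*\rangle\ge 0$ for all $x\in C$'' has a solution, and let $z$ denote its (unique) solution. Choose $x_0=y_0\in H$ and $\lambda\in\bigl(0,\frac{\sqrt2-1}{L}\bigr)$, and define for $n\ge0$ $$x_{n+1}=P_C(x_n-\lambda F(y_n)),\qquad y_{n+1}=2x_{n+1}-x_n.$$ Then $(x_n)$ converges to $z$ at least R-linearly, i.e. there exist $c>0$ and $q\in(0,1)$ such that $\|x_n-z\|\le c\,q^n$ for all $n$.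
   Context: $P_C(x)$ denotes the unique nearest point of $C$ to $x$. *)

From HB Require Import structures.
From mathcomp Require Import all_boot all_order all_algebra.
From mathcomp Require Import all_classical all_reals all_analysis.
Set Implicit Arguments. Unset Strict Implicit. Unset Printing Implicit Defensive.
Import Order.TTheory GRing.Theory Num.Theory.
Import numFieldNormedType.Exports.
Local Open Scope classical_set_scope.
Local Open Scope ring_scope.

(* A real inner product inducing the norm of V (real Hilbert space =
   complete normed space whose norm comes from such an inner product). *)
Definition is_inner_product (R : realType) (V : normedModType R)
  (ip : V -> V -> R) : Prop :=
  (forall x y, ip x y = ip y x) /\
  (forall (a : R) (x y z : V), ip (a *: x + y) z = a * ip x z + ip y z) /\
  (forall x, `|x| = Num.sqrt (ip x x)).

Definition convex_subset (R : realType) (V : normedModType R) (C : set V) : Prop :=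
  forall x y (t : R), C x -> C y -> 0 <= t -> t <= 1 -> C (t *: x + (1 - t) *: y).

Definition is_metric_projection (R : realType) (V : normedModType R)
  (C : set V) (P : V -> V) : Prop :=
  forall x, C (P x) /\ (forall y, C y -> `|x - P x| <= `|x - y|).

From HB Require Import structures.
From mathcomp Require Import all_boot all_order all_algebra.
From mathcomp Require Import all_classical all_reals all_analysis.
From mathcomp Require Import lra ring.
Import Order.TTheory GRing.Theory Num.Theory.
Import numFieldNormedType.Exports.
Local Open Scope classical_set_scope.
Local Open Scope ring_scope.
Set Implicit Arguments. Unset Strict Implicit. Unset Printing Implicit Defensive.

(* Testing the variational characterisation [<u - P u, v - P u> <= 0] of the
   projection at the step producing [x_(n+1)] (against [z]) and at the step
   producing [x_n] (against [x_(n+1)] and [x_(n-1)]), together with strong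
   monotonicity at [(y_n, z)], gives an energy inequality for
   [`|x_(n+1) - z|^2]. Bounding [F y_n - F y_(n-1)] by Lipschitz continuity and
   the cross terms by AM-GM, the quantity
   [`|x_n - z|^2 + lam L `|x_n - y_(n-1)|^2 + q^-1 2 lam <F z, x_(n-1) - z>]
   contracts by [q = 1 - rho / 2], where
   [rho = min ((1 - 2 lam L - (lam L)^2) / 4) (2 lam m)] is positive exactly
   because [lam L < sqrt 2 - 1]. Square roots then give the ratio [sqrt q]. *)

Section InnerProduct.
Variables (R : realType) (V : normedModType R) (ip : V -> V -> R).
Hypothesis ipP : is_inner_product ip.

Lemma ipC a b : ip a b = ip b a.
Proof. by case: ipP. Qed.

Lemma ipDl a b c : ip (a + b) c = ip a c + ip b c.
Proof. by case: ipP => _ [ipZD _]; rewrite -{1}(scale1r a) ipZD mul1r. Qed.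

Lemma ip0l c : ip 0 c = 0.
Proof. by have := ipDl 0 0 c; rewrite addr0; lra. Qed.

Lemma ipZl k a c : ip (k *: a) c = k * ip a c.
Proof. by case: ipP => _ [ipZD _]; rewrite -(addr0 (k *: a)) ipZD ip0l addr0. Qed.

Lemma ipNl a c : ip (- a) c = - ip a c.
Proof. by rewrite -scaleN1r ipZl mulN1r. Qed.

Lemma ipBl a b c : ip (a - b) c = ip a c - ip b c.
Proof. by rewrite ipDl ipNl. Qed.

Lemma ipDr a b c : ip c (a + b) = ip c a + ip c b.
Proof. by rewrite !(ipC c) ipDl. Qed.

Lemma ipZr k a c : ip c (k *: a) = k * ip c a.
Proof. by rewrite !(ipC c) ipZl. Qed.

Lemma ipNr a c : ip c (- a) = - ip c a.
Proof. by rewrite !(ipC c) ipNl. Qed.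

Lemma ipBr a b c : ip c (a - b) = ip c a - ip c b.
Proof. by rewrite !(ipC c) ipBl. Qed.

Lemma ipxx (a : V) : ip a a = `|a| ^+ 2.
Proof.
case: ipP => _ [_ normE]; have [aa_ge0|aa_lt0] := lerP 0 (ip a a).
  by rewrite normE sqr_sqrtr.
have /normr0_eq0 a0 : `|a| = 0 by rewrite normE ler0_sqrtr // ltW.
by move: aa_lt0; rewrite a0 ip0l ltxx.
Qed.

Lemma sqr_normB (a b : V) : `|a - b| ^+ 2 = `|a| ^+ 2 - 2 * ip a b + `|b| ^+ 2.
Proof. rewrite -!ipxx ipBl !ipBr (ipC b a); ring. Qed.

Lemma sqr_normD (a b : V) : `|a + b| ^+ 2 = `|a| ^+ 2 + 2 * ip a b + `|b| ^+ 2.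
Proof. rewrite -!ipxx ipDl !ipDr (ipC b a); ring. Qed.

Lemma sqr_normB_le (a b : V) : `|a - b| ^+ 2 <= 2 * `|a| ^+ 2 + 2 * `|b| ^+ 2.
Proof. by rewrite sqr_normB; have := sqr_ge0 `|a + b|; rewrite sqr_normD; lra. Qed.

Lemma ip_le_normM (a b : V) : ip a b <= `|a| * `|b|.
Proof.
have := sqr_ge0 `|(`|b| *: a - `|a| *: b)|.
rewrite sqr_normB ipZl ipZr !normrZ !normr_id => sq_ge0.
have [->|a0] := eqVneq a 0; first by rewrite ip0l normr0 mul0r.
have [->|b0] := eqVneq b 0; first by rewrite ipC ip0l normr0 mulr0.
have ab_gt0 : 0 < 2 * (`|a| * `|b|) by rewrite !mulr_gt0 ?normr_gt0.
by rewrite -(ler_pM2l ab_gt0); nra.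
Qed.

Lemma metric_projection_obtuse (C : set V) (P : V -> V) (x y : V) :
  convex_subset C -> is_metric_projection C P -> C y ->
  ip (x - P x) (y - P x) <= 0.
Proof.
move=> convC projP Cy; set e := x - P x; set h := y - P x.
have step_le t : 0 < t -> t <= 1 -> 2 * ip e h <= t * `|h| ^+ 2.
  move=> t_gt0 t_le1.
  have := (projP x).2 _ (convC _ _ t Cy (projP x).1 (ltW t_gt0) t_le1).
  rewrite scalerBl scale1r addrCA -scalerBr opprD addrA -/e -/h.
  rewrite -(ler_pXn2r (_ : 0 < 2)%N) ?nnegrE // (sqr_normB e) ipZr normrZ gtr0_norm //.
  by move=> le; rewrite -(ler_pM2l t_gt0); nra.
rewrite leNgt; apply/negP => eh_gt0; set N := `|h| ^+ 2 in step_le.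
have N_ge0 : 0 <= N by apply: sqr_ge0.
have t_gt0 : 0 < ip e h / (ip e h + N) by rewrite divr_gt0 // ltr_wpDr.
have t_le1 : ip e h / (ip e h + N) <= 1 by rewrite ler_pdivrMr ?mul1r ?lerDl // ltr_wpDr.
have : ip e h / (ip e h + N) * N <= ip e h.
  by rewrite mulrAC ler_pdivrMr ?ltr_wpDr //; nra.
by have := step_le _ t_gt0 t_le1; lra.
Qed.
End InnerProduct.

Lemma scale2rB_split (R : pzRingType) (V : lmodType R) (a b w : V) :
  2 *: b - a - w = (b - w) + (b - a).
Proof. by rewrite scaler_nat mulr2n -addrA [RHS]addrACA (addrC (- w)). Qed.

Lemma mulr2_le_sqr (R : realFieldType) (c a b : R) :
  0 < c -> 2 * a * b <= c * a ^+ 2 + c^-1 * b ^+ 2.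
Proof.
move=> c_gt0; rewrite -subr_ge0 -(pmulr_rge0 _ c_gt0).
have -> : c * (c * a ^+ 2 + c^-1 * b ^+ 2 - 2 * a * b) = (c * a - b) ^+ 2.
  by field; rewrite gt_eqF.
exact: sqr_ge0.
Qed.

(* Scalar core of the contraction: in the application [Ne], [Ne'] are
   [`|x_n - z|^2], [`|x_(n+1) - z|^2], [W = `|x_(n+1) - y_n|],
   [S = `|x_n - y_(n-1)|], [U = `|x_n - x_(n-1)|], [D = `|y_n - z|^2],
   [al = lam * L], [mu = 2 lam m] and [bn], [bn1] are [2 lam <F z, x_n - z>],
   [2 lam <F z, x_(n-1) - z>]. *)
Lemma lyapunov_contraction (R : realFieldType) (al mu rho Ne Ne' W U S D bn bn1 : R) :
  let q := 1 - rho / 2 in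
  0 < al -> 0 < rho -> rho <= mu -> rho <= (1 - 2 * al - al ^+ 2) / 4 ->
  0 <= D -> 0 <= bn -> Ne <= 2 * D + 2 * U ^+ 2 ->
  Ne' <= Ne - W ^+ 2 - U ^+ 2 + 2 * al * (S + U) * W - mu * D - 2 * bn + bn1 ->
  Ne' + al * W ^+ 2 + q^-1 * bn <= q * (Ne + al * S ^+ 2 + q^-1 * bn1).
Proof.
move=> q al_gt0 rho_gt0 rho_le_mu rho_small D_ge0 bn_ge0 Ne_le energy.
set d := 1 - 2 * al - al ^+ 2 in rho_small.
have al_lt1 : al < 1 by rewrite /d in rho_small; nra.
have d_le1 : d <= 1 by rewrite /d; nra.
have q_gt0 : 0 < q by rewrite /q; lra.
have rho1_gt0 : 0 < 1 - rho by lra.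
have invq_le2 : q^-1 <= 2 by rewrite -div1r ler_pdivrMr // /q; lra.
have rho_ge0 := ltW rho_gt0.
have rho_al : rho * al <= rho by apply: ler_piMr => //; exact: ltW.
have rho_al2 : rho * al ^+ 2 <= rho by apply: ler_piMr => //; rewrite expr_le1 // ltW.
have rho_d : rho * d <= rho by exact: ler_piMr.
have coef_U : al ^+ 2 / (1 - rho) <= al ^+ 2 + d / 3.
  by rewrite ler_pdivrMr //; lra.
have coef_S : al / q <= al + d / 2.
  by rewrite ler_pdivrMr // /q; lra.
(* AM-GM with weights [1 - rho] and [q]; [coef] says the resulting
   coefficients of [W^2] fit into [1 - al]. *)
have hU := mulr2_le_sqr U (al * W) rho1_gt0.
have hS := mulr2_le_sqr S W q_gt0.
have coef : al ^+ 2 / (1 - rho) + al / q <= 1 - al.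
  by have dE : d = 1 - 2 * al - al ^+ 2 by []; lra.
have hW := ler_wpM2r (sqr_ge0 W) coef.
have hS' := ler_wpM2l (ltW al_gt0) hS.
have hbn := ler_wpM2r bn_ge0 invq_le2.
have hD := ler_wpM2r D_ge0 rho_le_mu.
have hNe := ler_wpM2l rho_ge0 Ne_le.
rewrite mulrDr mulVKf ?gt_eqF //.
set i1 := (1 - rho)^-1 in hU hW; set iq := q^-1 in hS' hbn hW *.
rewrite /q in hS' *; lra.
Qed.

Lemma geometric_bound_shift (R : realFieldType) (e : nat -> R) (q c : R) (k : nat) :
  0 < q -> 0 < c -> (forall n, e (n + k)%N <= c * q ^+ n) ->
  exists2 c', 0 < c' & forall n, e n <= c' * q ^+ n.
Proof.
elim: k c => [|k IH] c q_gt0 c_gt0 e_le.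
  by exists c => // n; have := e_le n; rewrite addn0.
apply: (IH (Num.max (c / q) (e k))) => //; first by rewrite lt_max divr_gt0.
case=> [|n]; first by rewrite add0n expr0 mulr1 le_max lexx orbT.
rewrite addSn -addnS (le_trans (e_le n)) // exprS mulrA.
apply: ler_wpM2r; first exact/exprn_ge0/ltW.
by rewrite -ler_pdivrMr // le_max lexx.
Qed.

Lemma le_sqrt_geometric (R : rcfType) (a K q : R) (n : nat) :
  0 <= a -> 0 <= K -> 0 <= q -> a ^+ 2 <= K * q ^+ n ->
  a <= Num.sqrt K * Num.sqrt q ^+ n.
Proof.
move=> a_ge0 K_ge0 q_ge0 a_le.
rewrite -(ler_pXn2r (_ : 0 < 2)%N) ?nnegrE ?mulr_ge0 ?exprn_ge0 ?sqrtr_ge0 //.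
by rewrite exprMn sqr_sqrtr // exprAC sqr_sqrtr.
Qed.

Section Iteration.
Variables (R : realType) (V : normedModType R) (ip : V -> V -> R).
Variables (C : set V) (P F : V -> V) (m L lam : R) (z : V) (x y : nat -> V).
Hypotheses (ipP : is_inner_product ip) (convC : convex_subset C)
  (projP : is_metric_projection C P).
Hypothesis F_smono : forall u v, m * `|u - v| ^+ 2 <= ip (F u - F v) (u - v).
Hypotheses (L_gt0 : 0 < L) (F_lip : forall u v, `|F u - F v| <= L * `|u - v|).
Hypotheses (Cz : C z) (z_sol : forall u, C u -> 0 <= ip (F z) (u - z)).
Hypothesis lam_gt0 : 0 < lam.
Hypothesis x_next : forall n, x n.+1 = P (x n - lam *: F (y n)).
Hypothesis y_next : forall n, y n.+1 = 2 *: x n.+1 - x n.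

Lemma x_in_C n : C (x n.+1).
Proof. by rewrite x_next; case: (projP (x n - lam *: F (y n))). Qed.

Lemma sol_gap_ge0 n : 0 <= 2 * lam * ip (F z) (x n.+1 - z).
Proof. by apply: mulr_ge0; [apply: mulr_ge0 => //; exact: ltW | apply/z_sol/x_in_C]. Qed.

Lemma sqr_dist_sol_step n :
  `|x n.+3 - z| ^+ 2 <= `|x n.+2 - z| ^+ 2 - `|x n.+3 - y n.+2| ^+ 2
    - `|x n.+2 - x n.+1| ^+ 2
    + 2 * lam * `|F (y n.+2) - F (y n.+1)| * `|x n.+3 - y n.+2|
    - 2 * lam * m * `|y n.+2 - z| ^+ 2
    - 4 * lam * ip (F z) (x n.+2 - z) + 2 * lam * ip (F z) (x n.+1 - z).
Proof.
have proj_le u v : C v -> ip (u - P u) (v - P u) <= 0 :=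
  metric_projection_obtuse ipP u convC projP.
have P1 := proj_le (x n.+2 - lam *: F (y n.+2)) _ Cz.
have P2 := proj_le (x n.+1 - lam *: F (y n.+1)) _ (x_in_C n.+2).
have P3 := proj_le (x n.+1 - lam *: F (y n.+1)) _ (x_in_C n).
rewrite -!x_next in P1 P2 P3.
have SM : lam * (m * `|y n.+2 - z| ^+ 2) <= lam * ip (F (y n.+2) - F z) (y n.+2 - z).
  by rewrite ler_pM2l.
have CS : lam * ip (F (y n.+1) - F (y n.+2)) (x n.+3 - y n.+2)
    <= lam * (`|F (y n.+2) - F (y n.+1)| * `|x n.+3 - y n.+2|).
  by rewrite ler_pM2l // distrC ip_le_normM.
set G0 := F (y n.+1) in P2 P3 CS *; set G1 := F (y n.+2) in P1 SM CS *.
rewrite y_next in SM CS *.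
rewrite -!(ipxx ipP) in SM *.
rewrite !(ipBl ipP, ipBr ipP, ipDl ipP, ipDr ipP, ipNl ipP, ipNr ipP,
  ipZl ipP, ipZr ipP) in P1 P2 P3 SM CS *.
have := ipC ipP (x n.+3) (x n.+2); have := ipC ipP (x n.+3) (x n.+1).
have := ipC ipP (x n.+2) (x n.+1); have := ipC ipP z (x n.+3).
have := ipC ipP z (x n.+2); have := ipC ipP z (x n.+1).
lra.
Qed.

Lemma F_y_step_le n :
  `|F (y n.+2) - F (y n.+1)| <= L * (`|x n.+2 - y n.+1| + `|x n.+2 - x n.+1|).
Proof.
apply: le_trans (F_lip _ _) _; apply: ler_wpM2l; first exact: ltW.
by rewrite y_next scale2rB_split ler_normD.
Qed.

Lemma sqr_dist_sol_le n :
  `|x n.+2 - z| ^+ 2 <= 2 * `|y n.+2 - z| ^+ 2 + 2 * `|x n.+2 - x n.+1| ^+ 2.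
Proof.
have := sqr_normB_le ipP (y n.+2 - z) (x n.+2 - x n.+1).
by rewrite y_next scale2rB_split addrK.
Qed.

(* The weight [lam * L] absorbs the Lipschitz cross term; the weight [q^-1] on
   the term [b_n = 2 lam <F z, x_n - z>], nonnegative since [z] solves the
   variational inequality, matches the pattern [- 2 b_(n+2) + b_(n+1)] of
   [sqr_dist_sol_step] because [q^-1 <= 2]. *)
Let lyap q n := `|x n.+2 - z| ^+ 2 + lam * L * `|x n.+2 - y n.+1| ^+ 2
  + q^-1 * (2 * lam * ip (F z) (x n.+1 - z)).

Lemma lyap_step rho n :
  let q := 1 - rho / 2 in
  0 < rho -> rho <= 2 * lam * m ->
  rho <= (1 - 2 * (lam * L) - (lam * L) ^+ 2) / 4 ->
  lyap q n.+1 <= q * lyap q n.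
Proof.
move=> q rho_gt0 rho_le rho_small.
rewrite /lyap.
apply: (lyapunov_contraction _ rho_gt0 rho_le rho_small _ _ (sqr_dist_sol_le n)).
- exact: mulr_gt0.
- exact: sqr_ge0.
- exact: sol_gap_ge0.
have := ler_wpM2r (normr_ge0 (x n.+3 - y n.+2)) (F_y_step_le n).
move/(ler_wpM2l (ltW lam_gt0)).
have := sqr_dist_sol_step n; lra.
Qed.

Lemma sqr_dist_sol_le_lyap q n : 0 < q -> `|x n.+2 - z| ^+ 2 <= lyap q n.
Proof.
move=> q_gt0; rewrite /lyap -addrA lerDl.
have lamL_ge0 : 0 <= lam * L by rewrite ltW ?mulr_gt0.
apply: addr_ge0; apply: mulr_ge0 => //; first by rewrite invr_ge0 ltW.
exact: sol_gap_ge0.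
Qed.

Lemma dist_sol_R_linear rho :
  0 < rho -> rho <= 2 * lam * m ->
  rho <= (1 - 2 * (lam * L) - (lam * L) ^+ 2) / 4 ->
  exists c q : R, 0 < c /\ 0 < q /\ q < 1 /\ forall n, `|x n - z| <= c * q ^+ n.
Proof.
move=> rho_gt0 rho_le rho_small; set q := 1 - rho / 2.
have q_gt0 : 0 < q.
  have : (1 - 2 * (lam * L) - (lam * L) ^+ 2) / 4 <= 1 / 4.
    by rewrite ler_pM2r //; have := mulr_gt0 lam_gt0 L_gt0; nra.
  rewrite /q; lra.
have q_lt1 : q < 1 by rewrite /q; lra.
have lyap_le n : lyap q n <= lyap q 0 * q ^+ n.
  elim: n => [|n IH]; first by rewrite expr0 mulr1.
  rewrite exprSr mulrA (le_trans (lyap_step n rho_gt0 rho_le rho_small)) //.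
  by rewrite mulrC ler_pM2r.
have lyap0_ge0 : 0 <= lyap q 0 := le_trans (sqr_ge0 _) (sqr_dist_sol_le_lyap 0 q_gt0).
have sqrtq_gt0 : 0 < Num.sqrt q by rewrite sqrtr_gt0.
have [c c_gt0 dist_le] : exists2 c, 0 < c & forall n, `|x n - z| <= c * Num.sqrt q ^+ n.
  apply: (@geometric_bound_shift _ _ _ (Num.sqrt (lyap q 0 + 1)) 2) => //.
    by rewrite sqrtr_gt0 ltr_pwDr.
  move=> n; rewrite addn2.
  apply: le_sqrt_geometric; [exact: normr_ge0 | exact: addr_ge0 | exact: ltW |].
  apply: le_trans (sqr_dist_sol_le_lyap n q_gt0) _; apply: le_trans (lyap_le n) _.
  by apply: ler_wpM2r; [exact/exprn_ge0/ltW | rewrite lerDl].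
exists c, (Num.sqrt q); do 3?split => //.
by rewrite -sqrtr1 ltr_sqrt.
Qed.
End Iteration.

Theorem theorem3p4 (R : realType) (H : completeNormedModType R)
  (ip : H -> H -> R) (C : set H) (P : H -> H) (F : H -> H)
  (m L lam : R) (z x0 : H) (x y : nat -> H) :
  is_inner_product ip ->
  C !=set0 -> closed C -> convex_subset C ->
  is_metric_projection C P ->
  0 < m -> (forall u v, ip (F u - F v) (u - v) >= m * `|u - v| ^+ 2) ->
  0 < L -> (forall u v, `|F u - F v| <= L * `|u - v|) ->
  C z -> (forall u, C u -> ip (F z) (u - z) >= 0) ->
  0 < lam -> lam < (Num.sqrt 2 - 1) / L ->
  x 0%N = x0 -> y 0%N = x0 ->
  (forall n, x n.+1 = P (x n - lam *: F (y n))) ->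
  (forall n, y n.+1 = 2 *: x n.+1 - x n) ->
  exists c q : R, 0 < c /\ 0 < q /\ q < 1 /\
    forall n, `|x n - z| <= c * q ^+ n.
Proof.
move=> ipP _ _ convC projP m_gt0 F_smono L_gt0 F_lip Cz z_sol lam_gt0 lam_lt _ _.
move=> x_next y_next.
have al_lt : lam * L < Num.sqrt 2 - 1 by rewrite -ltr_pdivlMr.
have d_gt0 : 0 < 1 - 2 * (lam * L) - (lam * L) ^+ 2.
  have al_gt0 := mulr_gt0 lam_gt0 L_gt0.
  have := sqr_sqrtr (ler0n R 2); have := sqrtr_ge0 (2 : R); nra.
have rho_gt0 : 0 < Num.min ((1 - 2 * (lam * L) - (lam * L) ^+ 2) / 4) (2 * lam * m).
  by rewrite lt_min divr_gt0 ?mulr_gt0.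
apply: (dist_sol_R_linear ipP convC projP F_smono L_gt0 F_lip Cz z_sol lam_gt0
  x_next y_next rho_gt0).
  by rewrite ge_min lexx orbT.
by rewrite ge_min lexx.
Qed.
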